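(* Let $I_n$ denote the number of inversion sequences of length $n$ avoiding all of the patterns $010,101,110,120,201,210$ (with $I_0=1$). Let $X=X(z)$ be the unique formal power series in $z$ satisfying $1-X-zX+2zX^2+z^2X-z^2X^3=0$. Then $$\sum_{n\ge0}I_nz^n=\frac{(X-1)(1-zX+z^2X)}{zX}=1+z+2z^2+5z^3+15z^4+50z^5+178z^6+663z^7+\cdots.$$
   Context: An inversion sequence of length $n$ is an integer sequence $(a_1,\dots,a_n)$ with $0\le a_i<i$ for all $i$. A pattern is a sequence $\sigma$ of non-negative integers containing every value from $0$ to $\max(\sigma)$; the reduction of a sequence replaces its smallest values by $0$, the next smallest by $1$, etc. A sequence $a$ contains $\sigma$ if some (not necessarily consecutive) subsequence of $a$ has reduction $\sigma$; otherwise $a$ avoids $\sigma$. Equivalently, these are the inversion sequences with no $i<j<k$ such that $a_j\ne a_k$ and $a_i\ge a_k$. *)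

From mathcomp Require Import all_boot all_order all_algebra.
Set Implicit Arguments. Unset Strict Implicit. Unset Printing Implicit Defensive.
Import Order.TTheory GRing.Theory Num.Theory.

(* A sequence (a_1,...,a_n) stored 0-indexed: position i holds a_(i+1),
   so the condition 0 <= a_(i+1) < i+1. *)
Definition is_invseq (s : seq nat) : bool :=
  all (fun i => nth 0 s i < i.+1) (iota 0 (size s)).

Definition reduction (s : seq nat) : seq nat :=
  map (fun x => size (undup (filter (fun y => y < x) s))) s.

Definition contains (s sigma : seq nat) : bool :=
  [exists m : (size s).-tuple bool, reduction (mask m s) == sigma].

Definition avoids (s sigma : seq nat) : bool := ~~ contains s sigma.

Definition pats : seq (seq nat) :=
  [:: [:: 0; 1; 0]; [:: 1; 0; 1]; [:: 1; 1; 0];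
      [:: 1; 2; 0]; [:: 2; 0; 1]; [:: 2; 1; 0]].

(* I_n : number of inversion sequences of length n avoiding all of pats.
   Entries of an inversion sequence of length n are < n, so they are
   enumerated as n-tuples over 'I_n. *)
Definition I_count (n : nat) : nat :=
  #|[pred a : n.-tuple 'I_n |
      is_invseq (map val a) && all (avoids (map val a)) pats]|.

Local Open Scope ring_scope.

Definition fps := nat -> rat.
Definition fps_const (c : rat) : fps := fun n => if n == 0%N then c else 0.
Definition fps_z : fps := fun n => if n == 1%N then 1 else 0.
Definition fps_add (f g : fps) : fps := fun n => f n + g n.
Definition fps_opp (f : fps) : fps := fun n => - f n.
Definition fps_sub (f g : fps) : fps := fps_add f (fps_opp g).
Definition fps_mul (f g : fps) : fps :=
  fun n => \sum_(i < n.+1) f i * g (n - i)%N.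

Definition X_eqn_lhs (X : fps) : fps :=
  let z := fps_z in
  let c := fps_const in
  fps_add
   (fps_add
     (fps_add
       (fps_sub (fps_sub (c 1) X) (fps_mul z X))
       (fps_mul (c 2) (fps_mul z (fps_mul X X))))
     (fps_mul (fps_mul z z) X))
   (fps_opp (fps_mul (fps_mul z z) (fps_mul X (fps_mul X X)))).

Definition solves_X_eqn (X : fps) : Prop := forall n, X_eqn_lhs X n = 0.

Definition I_gf : fps := fun n => (I_count n)%:R.

(* An inversion sequence avoids the six patterns iff it has no i < j < k with
   a_j <> a_k <= a_i.  Building a sequence entry by entry, the number of ways a
   good sequence s extends by m more entries depends only on its slack
   |s| - (max s + 1) and on how many values below max s + 1 may follow it; this
   gives a two-parameter recurrence for the counts [ext_count m h].  For the
   generating functions in z it is a linear recurrence in h whose characteristic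
   polynomial has the root 1/(zX) (kernel method): dividing this root out leaves
   series d_h with d_h = zX d_(h+1), which therefore vanish, and d_0 = 0 together
   with the equations for h = 0, 1 gives the identity.  X itself exists and is
   unique by Picard iteration of the equation written as X = 1 + z(...). *)

From mathcomp Require Import all_boot all_order all_algebra.
From mathcomp Require Import zify lra.
From Stdlib Require Import FunctionalExtensionality Ring.
Set Implicit Arguments. Unset Strict Implicit. Unset Printing Implicit Defensive.
Import GRing.Theory.

Lemma reduction3_in_pats a b c :
  (reduction [:: a; b; c] \in pats) = (b != c) && (c <= a).
Proof.
rewrite /reduction /=.
case: (ltngtP a b) => hab; case: (ltngtP b c) => hbc; case: (ltngtP a c) => hac;
  rewrite ?hab ?hbc ?hac ?ltnn /= ?(ltn_geF (ltnW hab)) ?(ltn_geF (ltnW hbc))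
          ?(ltn_geF (ltnW hac));
  try (subst; rewrite ?ltnn /=); try lia.
all: by rewrite ?inE ?eqxx ?(ltn_eqF hab) ?(gtn_eqF hab) ?(ltn_eqF hbc) ?(gtn_eqF hbc)
                ?(ltn_eqF hac) ?(gtn_eqF hac).
Qed.

Lemma containsP s sigma :
  reflect (exists2 u, subseq u s & reduction u = sigma) (contains s sigma).
Proof.
apply: (iffP existsP) => [[m /eqP hm]|[u /subseqP [m hm ->] hr]].
  by exists (mask m s); first exact: mask_subseq.
by exists (Tuple (introT eqP hm)); rewrite /= hr.
Qed.

Definition pats_free (s : seq nat) :=
  forall a b c, subseq [:: a; b; c] s -> (b == c) || (a < c).

Lemma avoids_patsP s : reflect (pats_free s) (all (avoids s) pats).
Proof.
apply: (iffP allP) => [avs a b c sub|free sigma sigma_pat].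
  apply: contraT; rewrite negb_or -leqNgt => bad.
  have in_pats : reduction [:: a; b; c] \in pats by rewrite reduction3_in_pats.
  by case/negP: (avs _ in_pats); apply/containsP; exists [:: a; b; c].
apply/negP => /containsP [u sub red_u].
have size_u : size u = 3.
  have : all (fun q => size q == 3) pats by [].
  by move/allP/(_ _ sigma_pat); rewrite -red_u size_map => /eqP.
move: sub red_u; case: u size_u => [|a [|b [|c [|? ?]]]] //= _ sub red_u.
have := free a b c sub; move: sigma_pat; rewrite -red_u reduction3_in_pats; lia.
Qed.

Lemma subseq_rcons2 (u t : seq nat) c l :
  subseq (rcons u c) (rcons t l) = subseq (rcons u c) t || (c == l) && subseq u t.
Proof.
rewrite -subseq_rev !rev_rcons /=; case: eqP => [->|_]; last first.
  by rewrite orbF -[in RHS]subseq_rev rev_rcons.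
rewrite subseq_rev /=.
apply/idP/idP => [->|/orP [h|//]]; first by rewrite orbT.
exact: subseq_trans (subseq_rcons _ _) h.
Qed.

Lemma subseq3_rcons (t : seq nat) a b c l :
  subseq [:: a; b; c] (rcons t l) = subseq [:: a; b; c] t || (c == l) && subseq [:: a; b] t.
Proof. exact: (subseq_rcons2 [:: a; b]). Qed.

Lemma subseq2_rcons (t : seq nat) a b l :
  subseq [:: a; b] (rcons t l) = subseq [:: a; b] t || (b == l) && (a \in t).
Proof. by rewrite (subseq_rcons2 [:: a]) sub1seq. Qed.

(* [x] may be appended to [t]: every entry of [t] equals [x] or is preceded
   only by entries smaller than [x]. *)
Fixpoint admissible_rev (r : seq nat) x :=
  if r is l :: r' then admissible_rev r' x && ((l == x) || all (fun y => y < x) r')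
  else true.
Definition admissible t x := admissible_rev (rev t) x.

Lemma admissible_rcons t l x :
  admissible (rcons t l) x = admissible t x && ((l == x) || all (fun y => y < x) t).
Proof. by rewrite /admissible rev_rcons /= all_rev. Qed.

Lemma admissibleP t x :
  reflect (forall a b, subseq [:: a; b] t -> (b == x) || (a < x)) (admissible t x).
Proof.
elim/last_ind: t => [|t l IH]; first by constructor => a b.
rewrite admissible_rcons; apply: (iffP andP) => [[/IH adm_t adm_l] a b|adm].
  rewrite subseq2_rcons => /orP [/adm_t //|/andP [/eqP -> a_t]].
  by case/orP: adm_l => [-> //|/allP/(_ _ a_t) ->]; rewrite orbT.
split; first by apply/IH => a b sub; apply: adm; rewrite subseq2_rcons sub.
case: eqP => //= l_neq; apply/allP => a a_t.
by have := adm a l; rewrite subseq2_rcons a_t eqxx orbT => /(_ isT); case: eqP.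
Qed.

Lemma pats_free_rcons t l :
  pats_free (rcons t l) <->
  pats_free t /\ (forall a b, subseq [:: a; b] t -> (b == l) || (a < l)).
Proof.
split => [free|[free_t adm] a b c].
  by split => [a b c sub|a b sub]; apply: free; rewrite subseq3_rcons sub ?eqxx ?orbT.
by rewrite subseq3_rcons => /orP [/free_t //|/andP [/eqP -> sub]]; exact: adm.
Qed.

Lemma invseq_rcons t x : is_invseq (rcons t x) = is_invseq t && (x <= size t).
Proof.
rewrite /is_invseq size_rcons -addn1 iotaD add0n all_cat /= andbT nth_rcons ltnn eqxx.
congr (_ && _); apply: eq_in_all => i; rewrite mem_iota add0n => /andP [_ lt_i].
by rewrite nth_rcons lt_i.
Qed.

Definition good (s : seq nat) := is_invseq s && all (avoids s) pats.

Lemma good_nil : good [::].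
Proof. by apply/andP; split => //; apply/avoids_patsP => a b c. Qed.

Lemma good_rcons t x : good (rcons t x) = [&& good t, x <= size t & admissible t x].
Proof.
rewrite /good invseq_rcons.
case: (is_invseq t); case: (x <= size t); rewrite /= ?andbF //.
apply/avoids_patsP/andP => [/pats_free_rcons [free_t adm]|[/avoids_patsP ? /admissibleP ?]].
  by split; [apply/avoids_patsP | apply/admissibleP].
exact/pats_free_rcons.
Qed.

Lemma good_catl s u : good (s ++ u) -> good s.
Proof.
elim/last_ind: u => [|u y IH]; first by rewrite cats0.
by rewrite -rcons_cat good_rcons => /andP [/IH].
Qed.

Definition ubound (s : seq nat) := foldr (fun y m => maxn y.+1 m) 0 s.

Lemma all_ltn_ubound x s : all (fun y => y < x) s = (ubound s <= x).
Proof. by elim: s => //= y s ->; rewrite geq_max. Qed.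

Lemma ubound_rcons t l : ubound (rcons t l) = maxn (ubound t) l.+1.
Proof. by elim: t => [|y t IH] /=; rewrite ?max0n ?maxn0 // IH maxnA. Qed.

Lemma good_ubound s : good s -> ubound s <= size s.
Proof.
elim/last_ind: s => [|t l IH] //.
rewrite good_rcons ubound_rcons size_rcons => /and3P [/IH ub_t l_t _].
by rewrite geq_max ltnS l_t (leq_trans ub_t).
Qed.

Lemma admissible_ge_ubound s x : ubound s <= x -> admissible s x.
Proof.
elim/last_ind: s => [|t l IH] //; rewrite ubound_rcons geq_max admissible_rcons.
by case/andP => ub_t l_x; rewrite IH // all_ltn_ubound ub_t orbT.
Qed.

Lemma good_rcons_low t l x : good (rcons t l) -> x < ubound (rcons t l) ->
  good (rcons (rcons t l) x) = (minn (ubound t) l <= x) && (x < l.+1).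
Proof.
move=> good_tl x_lt; have ub_tl := good_ubound good_tl.
rewrite good_rcons good_tl (leq_trans (ltnW x_lt) ub_tl) /= admissible_rcons.
move: good_tl; rewrite good_rcons => /and3P [_ _ adm_l].
rewrite ubound_rcons in x_lt.
have [->|x_neq] := eqVneq x l.
  by rewrite adm_l geq_minr ltnSn.
rewrite /= all_ltn_ubound.
case: (leqP (ubound t) x) => ub_x.
  by rewrite admissible_ge_ubound //=; lia.
by rewrite andbF; apply/esym/negbTE; lia.
Qed.

(* By [good_rcons_low], the number of values below [ubound (rcons t l)] that
   may follow a good [rcons t l]. *)
Definition nlow_rcons t l := if ubound t <= l then l.+1 - ubound t else 1.

Definition slack s := size s - ubound s.

(* [ext_count m h] counts the good extensions of length [m] of a good sequence
   of slack [h] that admits exactly one next value below its [ubound]; see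
   [ncompletions_good]. *)
Fixpoint ext_count (m : nat) : nat -> nat :=
  match m with
  | 0 => fun _ => 1
  | m'.+1 => fun h =>
      sumn [seq ext_count m' j + (h - j) * (if m' is m''.+1 then ext_count m'' j.+1 else 0)
           | j <- iota 0 h.+1] + ext_count m' h.+1
  end.

Definition ext_count_pred m h := if m is m'.+1 then ext_count m' h else 0.

Definition high_sum m h :=
  \sum_(0 <= j < h.+1) (ext_count m j + (h - j) * ext_count_pred m j.+1).

Lemma ext_countS m h : ext_count m.+1 h = high_sum m h + ext_count m h.+1.
Proof. by rewrite /high_sum /index_iota subn0 /= sumnE big_map big_cons. Qed.

Definition extension_count m t l :=
  ext_count m (slack (rcons t l)) +
  (nlow_rcons t l).-1 * ext_count_pred m (slack (rcons t l)).+1.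

Lemma sum_indicator_interval lo hi n :
  \sum_(0 <= x < n) ((lo <= x) && (x < hi) : nat) = minn hi n - lo.
Proof.
elim: n => [|n IH]; first by rewrite big_geq // minn0.
by rewrite big_nat_recr //= IH; case: (leqP lo n) => ? ; case: (ltnP n hi) => ? /=; lia.
Qed.

Lemma sum_low_extensions m t l : good (rcons t l) ->
  \sum_(0 <= x < ubound (rcons t l))
     (if good (rcons (rcons t l) x) then extension_count m (rcons t l) x else 0) =
  nlow_rcons t l * ext_count m (slack (rcons t l)).+1.
Proof.
move=> good_tl; have ub_tl := good_ubound good_tl; rewrite big_nat_cond.
rewrite (eq_bigr (fun x => ((minn (ubound t) l <= x) && (x < l.+1) : nat) *
                          ext_count m (slack (rcons t l)).+1)); last first.
  move=> x /andP [/andP [_ x_lt] _]; rewrite good_rcons_low //.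
  case: ifP => //= _; rewrite /extension_count /nlow_rcons leqNgt x_lt /= mul0n addn0 mul1n.
  rewrite /slack [size (rcons _ x)]size_rcons [ubound (rcons _ x)]ubound_rcons.
  by congr (ext_count m _); lia.
rewrite -big_nat_cond -big_distrl /= sum_indicator_interval ubound_rcons /nlow_rcons.
by congr (_ * _); case: ifP; lia.
Qed.

Lemma sum_high_extensions m s : good s ->
  \sum_(ubound s <= x < (size s).+1)
     (if good (rcons s x) then extension_count m s x else 0) = high_sum m (slack s).
Proof.
move=> good_s; have ub_s := good_ubound good_s.
rewrite big_nat_cond (eq_bigr (fun x => ext_count m (size s - x) +
                                        (x - ubound s) * ext_count_pred m (size s - x).+1)).
  rewrite -big_nat_cond -{1}(add0n (ubound s)) big_addn big_nat_rev /= /high_sum /slack.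
  have -> : (size s).+1 - ubound s = (size s - ubound s).+1 by lia.
  apply: eq_big_nat => j /andP [_ lt_j].
  by congr (ext_count m _ + _ * ext_count_pred m _.+1); lia.
move=> x /andP [/andP [ub_x x_le] _].
rewrite good_rcons good_s admissible_ge_ubound // andbT -ltnS x_le.
rewrite /extension_count /nlow_rcons /slack ub_x size_rcons ubound_rcons.
have -> : (size s).+1 - maxn (ubound s) x.+1 = size s - x by lia.
by have -> : (x.+1 - ubound s).-1 = x - ubound s by lia.
Qed.

Lemma extension_countS m t l : good (rcons t l) ->
  extension_count m.+1 t l =
  \sum_(0 <= x < (size (rcons t l)).+1)
     (if good (rcons (rcons t l) x) then extension_count m (rcons t l) x else 0).
Proof.
move=> good_tl; have ub_tl := good_ubound good_tl.
rewrite (big_cat_nat (n := ubound (rcons t l))) //=; last by lia.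
rewrite sum_low_extensions // sum_high_extensions // /extension_count ext_countS /=.
have : 0 < nlow_rcons t l by rewrite /nlow_rcons; case: ifP => //; lia.
by case: (nlow_rcons t l) => [//|g] _; rewrite mulSn /=; lia.
Qed.

Fixpoint words (N n : nat) : seq (seq nat) :=
  if n is n'.+1 then [seq x :: u | x <- iota 0 N, u <- words N n'] else [:: [::]].

Definition ncompletions N m s := count (fun u => good (s ++ u)) (words N m).

Lemma ncompletionsS N m s :
  ncompletions N m.+1 s = \sum_(0 <= x < N) ncompletions N m (rcons s x).
Proof.
rewrite /ncompletions /= /index_iota subn0.
elim: (iota 0 N) => [|x xs IH]; rewrite ?big_nil ?big_cons //= count_cat count_map IH.
by congr (_ + _); apply: eq_count => u; rewrite /= cat_rcons.
Qed.

Lemma ncompletions_bad N m s : ~~ good s -> ncompletions N m s = 0.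
Proof.
move=> bad_s; rewrite /ncompletions (eq_count (a2 := pred0)) ?count_pred0 // => u.
by apply/negbTE; apply: contra bad_s => /good_catl.
Qed.

Lemma ncompletions_good N m t l : good (rcons t l) -> size (rcons t l) + m <= N ->
  ncompletions N m (rcons t l) = extension_count m t l.
Proof.
elim: m t l => [|m IH] t l good_tl size_le.
  by rewrite /ncompletions /= cats0 good_tl /extension_count /= muln0 addn0.
rewrite extension_countS // ncompletionsS.
rewrite (big_cat_nat (n := (size (rcons t l)).+1)) /=; [|by []|lia].
have high0 : \sum_((size (rcons t l)).+1 <= x < N) ncompletions N m (rcons (rcons t l) x) = 0.
  rewrite big_nat_cond big1 // => x /andP [/andP [x_gt _] _].
  by rewrite ncompletions_bad // good_rcons leqNgt x_gt andbF.
rewrite high0 addn0.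
apply: eq_bigr => x _; case: ifP => [good_x|/negbT]; last exact: ncompletions_bad.
by apply: IH => //; rewrite size_rcons; lia.
Qed.

Lemma ncompletions_nil N m : m < N -> ncompletions N m.+1 [::] = ext_count m 0.
Proof.
move=> lt_mN; rewrite ncompletionsS big_ltn; last by lia.
have good0 : good (rcons [::] 0) by rewrite (good_rcons [::]) good_nil.
rewrite ncompletions_good //.
rewrite big_nat_cond big1 ?addn0.
  by rewrite /extension_count /nlow_rcons /slack /= addn0.
move=> x /andP [/andP [x_gt _] _].
by rewrite ncompletions_bad // (good_rcons [::]) good_nil /=; case: x x_gt.
Qed.

Lemma words_uniq N n : uniq (words N n).
Proof.
elim: n => [|n IH] //=; apply: allpairs_uniq => //; first exact: iota_uniq.
by move=> [x u] [y v] _ _ /= [-> ->].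
Qed.

Lemma mem_words N n u : (u \in words N n) = (size u == n) && all (fun x => x < N) u.
Proof.
elim: n u => [|n IH] [|x u] //=; first by apply/allpairsP => [[[y v] [_ _]]].
apply/allpairsP/idP => [[[y v] [/= y_lt v_in [-> ->]]]|].
  by move: y_lt v_in; rewrite mem_iota IH add0n eqSS => /andP [_ ->] /andP [-> ->].
rewrite eqSS => /and3P [size_u x_lt all_u]; exists (x, u) => /=.
by rewrite mem_iota IH size_u all_u x_lt.
Qed.

Lemma card_tuples_words N n (Q : pred (seq nat)) :
  #|[pred a : n.-tuple 'I_N | Q (map val a)]| = count Q (words N n).
Proof.
rewrite cardE /enum_mem size_filter -enumT.
rewrite -[LHS]/(count (preim (fun a : n.-tuple 'I_N => map val a) Q) (enum {: n.-tuple 'I_N})).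
rewrite -count_map.
apply/permP; apply: uniq_perm.
- rewrite map_inj_uniq ?enum_uniq // => a b /= eq_ab.
  by apply: val_inj; apply: (inj_map val_inj) eq_ab.
- exact: words_uniq.
move=> u; rewrite mem_words; apply/mapP/idP => [[a _ ->]|/andP [/eqP size_u all_u]].
  rewrite size_map size_tuple eqxx /=; apply/allP => x /mapP [i _ ->]; exact: ltn_ord.
have val_u : map val (pmap insub u : seq 'I_N) = u.
  by rewrite (pmap_filter (@insubK _ _ _)); apply/all_filterP;
     rewrite (eq_all (@isSome_insub _ _ _)).
have size_pu : size (pmap insub u : seq 'I_N) == n by rewrite -(size_map val) val_u size_u.
by exists (Tuple size_pu); rewrite ?mem_enum //= val_u.
Qed.

Lemma I_count_words n : I_count n = count good (words n n).
Proof. exact: (card_tuples_words n n good). Qed.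

Lemma I_count0 : I_count 0 = 1.
Proof. by rewrite I_count_words /= good_nil. Qed.

Lemma I_countS n : I_count n.+1 = ext_count n 0.
Proof. by rewrite I_count_words -(@ncompletions_nil n.+1 n). Qed.

Lemma high_sumS m h : high_sum m h.+1 =
  high_sum m h + ext_count m h.+1 + \sum_(0 <= j < h.+1) ext_count_pred m j.+1.
Proof.
rewrite /high_sum big_nat_recr //= subnn mul0n addn0 addnAC -big_split /=.
congr (_ + _); apply: eq_big_nat => j /andP [_ lt_j].
by rewrite subSn // mulSn; lia.
Qed.

Lemma ext_count_diff2 m h :
  ext_count m.+1 h.+2 + ext_count m.+1 h + ext_count m h.+2 =
  2 * ext_count m.+1 h.+1 + ext_count m h.+3 + ext_count_pred m h.+2.
Proof. by rewrite !ext_countS !high_sumS [\sum_(0 <= j < h.+2) _]big_nat_recr //=; lia. Qed.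

Lemma ext_count_succ0 m : ext_count m.+1 0 = ext_count m 0 + ext_count m 1.
Proof. by rewrite ext_countS /high_sum big_nat1 subnn mul0n addn0. Qed.

Lemma ext_count_succ1 m : ext_count m.+1 1 =
  ext_count m 0 + ext_count_pred m 1 + ext_count m 1 + ext_count m 2.
Proof. by rewrite ext_countS high_sumS /high_sum !big_nat1 subnn mul0n; lia. Qed.

Local Open Scope ring_scope.

Lemma fps_ext (f g : fps) : (forall n, f n = g n) -> f = g.
Proof. exact: functional_extensionality. Qed.

(* Up to degree [n], products of series are products of their degree-[n]
   truncations, so the ring laws are inherited from [{poly rat}]. *)
Definition trunc n (f : fps) : {poly rat} := \poly_(i < n.+1) f i.

Lemma fps_mul_trunc n m f g : (m <= n)%N -> fps_mul f g m = (trunc n f * trunc n g)`_m.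
Proof.
move=> le_mn; rewrite coefM; apply: eq_bigr => i _.
have lt_i : (i < n.+1)%N by rewrite ltnS (leq_trans _ le_mn) // -ltnS.
have lt_mi : (m - i < n.+1)%N by rewrite ltnS (leq_trans (leq_subr _ _) le_mn).
by rewrite !coef_poly lt_i lt_mi.
Qed.

Lemma fps_mulC f g : fps_mul f g = fps_mul g f.
Proof. by apply: fps_ext => n; rewrite !(@fps_mul_trunc n) // mulrC. Qed.

Lemma fps_mulA f g h : fps_mul f (fps_mul g h) = fps_mul (fps_mul f g) h.
Proof.
apply: fps_ext => n.
have -> : fps_mul f (fps_mul g h) n = (trunc n f * (trunc n g * trunc n h))`_n.
  rewrite coefM; apply: eq_bigr => i _.
  by rewrite coef_poly (leq_trans (ltn_ord i)) // (@fps_mul_trunc n (n - i)) ?leq_subr.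
have -> : fps_mul (fps_mul f g) h n = ((trunc n f * trunc n g) * trunc n h)`_n.
  rewrite coefM; apply: eq_bigr => i _.
  rewrite (@fps_mul_trunc n i) ?coef_poly; last by rewrite -ltnS.
  by rewrite ltnS leq_subr.
by rewrite mulrA.
Qed.

Lemma fps_const0 n : fps_const 0 n = 0.
Proof. by case: n. Qed.

Lemma fps_mul1 f : fps_mul (fps_const 1) f = f.
Proof.
apply: fps_ext => n; rewrite /fps_mul big_ord_recl /= subn0 mul1r.
by rewrite big1 ?addr0 // => i _; rewrite mul0r.
Qed.

Lemma fps_ring :
  ring_theory (fps_const 0) (fps_const 1) fps_add fps_mul fps_sub fps_opp (@eq fps).
Proof.
constructor.
- by move=> f; apply: fps_ext => n; rewrite /fps_add fps_const0 add0r.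
- by move=> f g; apply: fps_ext => n; rewrite /fps_add addrC.
- by move=> f g h; apply: fps_ext => n; rewrite /fps_add addrA.
- exact: fps_mul1.
- exact: fps_mulC.
- exact: fps_mulA.
- move=> f g h; apply: fps_ext => n.
  by rewrite /fps_add /fps_mul -big_split; apply: eq_bigr => i _; rewrite mulrDl.
- by [].
- by move=> f; apply: fps_ext => n; rewrite /fps_add /fps_opp fps_const0 subrr.
Qed.

Add Ring fps_ring : fps_ring.

Local Notation "f +' g" := (fps_add f g) (at level 50, left associativity).
Local Notation "f -' g" := (fps_sub f g) (at level 50, left associativity).
Local Notation "f *' g" := (fps_mul f g) (at level 40, left associativity).
Local Notation c0 := (fps_const 0).
Local Notation c1 := (fps_const 1).
Local Notation z := fps_z.

Lemma fps_const2 : fps_const 2 = c1 +' c1.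
Proof. by apply: fps_ext => -[|n]. Qed.

Lemma fps_mul_coef0 f g : (f *' g) 0%N = f 0%N * g 0%N.
Proof. by rewrite /fps_mul big_ord1. Qed.

Lemma fps_zmul0 f : (z *' f) 0%N = 0.
Proof. by rewrite fps_mul_coef0 mul0r. Qed.

Lemma fps_zmulS f n : (z *' f) n.+1 = f n.
Proof.
rewrite /fps_mul big_ord_recl /fps_z /= mul0r add0r big_ord_recl /= mul1r subSS subn0.
by rewrite big1 ?addr0 // => i _; rewrite mul0r.
Qed.

Definition ext_gf (h : nat) : fps := fun m => (ext_count m h)%:R.

Lemma ext_gf_z2 h m : (z *' (z *' ext_gf h)) m.+1 = (ext_count_pred m h)%:R.
Proof. by rewrite fps_zmulS; case: m => [|m]; rewrite ?fps_zmul0 ?fps_zmulS. Qed.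

Lemma ext_gf0_eq : ext_gf 0 = c1 +' z *' ext_gf 0 +' z *' ext_gf 1.
Proof.
apply: fps_ext => -[|n]; rewrite /fps_add ?fps_zmul0 ?fps_zmulS /ext_gf.
  by rewrite /= !addr0.
by rewrite ext_count_succ0 natrD /= add0r.
Qed.

Lemma ext_gf1_eq :
  ext_gf 1 = c1 +' z *' (ext_gf 0 +' ext_gf 1) +' z *' (z *' ext_gf 1) +' z *' ext_gf 2.
Proof.
apply: fps_ext => -[|n]; rewrite /fps_add ?fps_zmul0 ?ext_gf_z2 ?fps_zmulS /ext_gf.
  by rewrite /= !addr0.
by rewrite ext_count_succ1 !natrD /= add0r; lra.
Qed.

Lemma ext_gf_rec h :
  z *' ext_gf h.+3 +' z *' (z *' ext_gf h.+2) +' ext_gf h.+1 +' ext_gf h.+1 =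
  z *' ext_gf h.+2 +' ext_gf h.+2 +' ext_gf h.
Proof.
apply: fps_ext => -[|n]; rewrite /fps_add ?fps_zmul0 ?ext_gf_z2 ?fps_zmulS /ext_gf.
  by rewrite /= !add0r.
have /(congr1 (fun k => k%:R : rat)) := ext_count_diff2 n h.
by rewrite !natrD natrM; lra.
Qed.

Definition vanishes_below k (f : fps) := forall i, (i < k)%N -> f i = 0.

Lemma fps_eq0_vanishes f : (forall k, vanishes_below k f) -> f = c0.
Proof. by move=> low; apply: fps_ext => n; rewrite (low n.+1) ?fps_const0. Qed.

Lemma vanishes_below_mull k g f : vanishes_below k f -> vanishes_below k (g *' f).
Proof.
move=> low i lt_ik; rewrite /fps_mul big1 // => j _.
by rewrite low ?mulr0 // (leq_ltn_trans (leq_subr _ _) lt_ik).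
Qed.

Lemma vanishes_below_zmul k f : vanishes_below k f -> vanishes_below k.+1 (z *' f).
Proof. by move=> low [|i] lt_ik; rewrite ?fps_zmul0 ?fps_zmulS ?low. Qed.

Lemma zdiv_chain_eq0 (d : nat -> fps) Y : (forall h, d h = z *' (Y *' d h.+1)) -> d 0%N = c0.
Proof.
move=> dS; suff low k h : vanishes_below k (d h) by apply: fps_eq0_vanishes => k.
elim: k h => [//|k IH] h.
by rewrite dS; apply/vanishes_below_zmul/vanishes_below_mull.
Qed.

Lemma fps_mul_unit_eq0 K f : K 0%N = 1 -> K *' f = c0 -> f = c0.
Proof.
move=> K0 Kf0; apply: fps_eq0_vanishes; elim=> [//|k IH] i.
rewrite ltnS leq_eqVlt => /predU1P [->|/IH //].
have := congr1 (fun g => g k) Kf0; rewrite /fps_mul big_ord_recl K0 mul1r subn0 fps_const0.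
rewrite big1 ?addr0 // => j _; rewrite IH ?mulr0 //.
by rewrite lift0; have := ltn_ord j; lia.
Qed.

Section KernelMethod.

Variable X : fps.
Hypothesis X_root : solves_X_eqn X.

Lemma X_eqn_lhs_eq0 : X_eqn_lhs X = c0.
Proof. by apply: fps_ext => n; rewrite X_root fps_const0. Qed.

Lemma X_coef0 : X 0%N = 1.
Proof.
have := X_root 0.
by rewrite /X_eqn_lhs /fps_add /fps_sub /fps_add /fps_opp !fps_mul_coef0 /fps_z /fps_const /=; lra.
Qed.

(* Since [X] solves its equation, [t = 1/(zX)] is a root of the characteristic
   polynomial [z t^3 + (z^2 - z - 1) t^2 + 2 t - 1] of the recurrence
   [ext_gf_rec] in [h]; [defect] is that recurrence with this root divided out. *)
Let P := (c1 +' z -' z *' z) *' X -' c1.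
Let defect h := z *' X *' ext_gf h.+2 -' P *' ext_gf h.+1 +' z *' X *' X *' ext_gf h.

Lemma defect_succ h : defect h = z *' (X *' defect h.+1).
Proof.
have -> : z *' (X *' defect h.+1) = defect h +' z *' X *' X *'
    ((z *' ext_gf h.+3 +' z *' (z *' ext_gf h.+2) +' ext_gf h.+1 +' ext_gf h.+1) -'
     (z *' ext_gf h.+2 +' ext_gf h.+2 +' ext_gf h)) -' X_eqn_lhs X *' ext_gf h.+1.
  by rewrite /defect /P /X_eqn_lhs; cbv zeta; rewrite fps_const2; ring.
by rewrite ext_gf_rec X_eqn_lhs_eq0; ring.
Qed.

Let K := (c1 -' (c1 +' c1) *' z *' X) *' (c1 -' z) -' z *' z *' X +' z *' z *' X *' X.

Lemma K_ext_gf0 : K *' ext_gf 0 = c1 -' z *' X.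
Proof.
set e0 := ext_gf 0 -' (c1 +' z *' ext_gf 0 +' z *' ext_gf 1).
set e1 := ext_gf 1 -'
  (c1 +' z *' (ext_gf 0 +' ext_gf 1) +' z *' (z *' ext_gf 1) +' z *' ext_gf 2).
have -> : K *' ext_gf 0 = (c1 -' z *' X) +' z *' defect 0 +'
                         (c1 -' (c1 +' c1) *' z *' X) *' e0 +' z *' X *' e1.
  by rewrite /K /defect /P /e0 /e1; ring.
have -> : e0 = c0 by rewrite /e0 {1}ext_gf0_eq; ring.
have -> : e1 = c0 by rewrite /e1 {1}ext_gf1_eq; ring.
by rewrite (zdiv_chain_eq0 defect_succ); ring.
Qed.

Lemma K_coef0 : K 0%N = 1.
Proof.
by rewrite /K /fps_add /fps_sub /fps_add /fps_opp !fps_mul_coef0 /fps_z /fps_const /= X_coef0; lra.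
Qed.

Lemma gf_identity :
  z *' X *' (c1 +' z *' ext_gf 0) = (X -' c1) *' (c1 -' z *' X +' z *' z *' X).
Proof.
set W := (X -' c1) *' (c1 -' z *' X +' z *' z *' X).
have K_diff : K *' (z *' X *' (c1 +' z *' ext_gf 0) -' W) = c0.
  have -> : K *' (z *' X *' (c1 +' z *' ext_gf 0) -' W) =
            z *' z *' X *' (K *' ext_gf 0) +' (z *' X *' K -' K *' W) by ring.
  rewrite K_ext_gf0.
  have -> : z *' z *' X *' (c1 -' z *' X) +' (z *' X *' K -' K *' W) =
            (c1 -' z) *' (c1 -' z *' X) *' X_eqn_lhs X.
    by rewrite /K /W /X_eqn_lhs; cbv zeta; rewrite fps_const2; ring.
  by rewrite X_eqn_lhs_eq0; ring.
have /fps_mul_unit_eq0 := K_diff; move/(_ K_coef0) => diff0.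
by transitivity (z *' X *' (c1 +' z *' ext_gf 0) -' W +' W); [ring | rewrite diff0; ring].
Qed.

End KernelMethod.

Definition X_step (f : fps) : fps :=
  c1 +' z *' (c0 -' f +' (c1 +' c1) *' f *' f +' z *' f -' z *' f *' f *' f).

Lemma X_eqn_lhs_step f : X_eqn_lhs f = X_step f -' f.
Proof. by rewrite /X_eqn_lhs /X_step; cbv zeta; rewrite fps_const2; ring. Qed.

Lemma X_step_contract k f g :
  vanishes_below k (f -' g) -> vanishes_below k.+1 (X_step f -' X_step g).
Proof.
move=> low; have -> : X_step f -' X_step g = z *' ((c0 -' c1 +' (c1 +' c1) *' (f +' g) +' z
    -' z *' (f *' f +' f *' g +' g *' g)) *' (f -' g)) by rewrite /X_step; ring.
exact/vanishes_below_zmul/vanishes_below_mull.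
Qed.

Lemma vanishes_below_sub_eq k f g : vanishes_below k (f -' g) -> forall i, (i < k)%N -> f i = g i.
Proof. by move=> low i /low /eqP; rewrite /fps_sub /fps_add /fps_opp subr_eq0 => /eqP. Qed.

Lemma solves_X_eqn_fix f : solves_X_eqn f -> X_step f = f.
Proof.
move=> f_root; have : X_eqn_lhs f = c0 by apply: fps_ext => n; rewrite f_root fps_const0.
by rewrite X_eqn_lhs_step => step_f; transitivity (X_step f -' f +' f); [ring | rewrite step_f; ring].
Qed.

Lemma X_eqn_unique X Y : solves_X_eqn X -> solves_X_eqn Y -> forall n, X n = Y n.
Proof.
move=> /solves_X_eqn_fix X_fix /solves_X_eqn_fix Y_fix n.
suff low k : vanishes_below k (X -' Y) by exact: (vanishes_below_sub_eq (low n.+1)).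
elim: k => [//|k IH]; rewrite -X_fix -Y_fix; exact: X_step_contract.
Qed.

Definition X_approx k := iter k X_step c0.

Lemma X_approx_succ k : vanishes_below k (X_approx k.+1 -' X_approx k).
Proof. by elim: k => [//|k IH]; apply: X_step_contract. Qed.

Lemma X_approx_stable j k i : (j <= k)%N -> (i < j)%N -> X_approx k i = X_approx j i.
Proof.
move=> /subnKC <-; elim: (k - j)%N => [|d IH] lt_ij; first by rewrite addn0.
rewrite addnS (vanishes_below_sub_eq (@X_approx_succ (j + d))) ?IH //.
exact: leq_trans lt_ij (leq_addr _ _).
Qed.

Definition X_sol : fps := fun n => X_approx n.+1 n.

Lemma X_sol_root : solves_X_eqn X_sol.
Proof.
have near n : vanishes_below n.+1 (X_sol -' X_approx n.+1).
  move=> i lt_in; rewrite /fps_sub /fps_add /fps_opp /X_sol.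
  by rewrite (@X_approx_stable i.+1 n.+1) ?subrr.
have X_sol_fix : X_step X_sol = X_sol.
  apply: fps_ext => n; rewrite (vanishes_below_sub_eq (X_step_contract (near n))) //.
  by rewrite -[X_step _]/(X_approx n.+2) (@X_approx_stable n.+1 n.+2).
by move=> n; rewrite X_eqn_lhs_step X_sol_fix /fps_sub /fps_add /fps_opp subrr.
Qed.

Lemma I_gf_ext_gf : I_gf = c1 +' z *' ext_gf 0.
Proof.
apply: fps_ext => -[|n]; rewrite /fps_add ?fps_zmul0 ?fps_zmulS /I_gf.
  by rewrite I_count0 addr0.
by rewrite I_countS add0r.
Qed.

Theorem mainTheorem6 :
  (exists X : fps, solves_X_eqn X) /\
  (forall X Y : fps, solves_X_eqn X -> solves_X_eqn Y -> forall n, X n = Y n) /\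
  (forall X : fps, solves_X_eqn X ->
     forall n,
       fps_mul (fps_mul fps_z X) I_gf n =
       fps_mul (fps_sub X (fps_const 1))
               (fps_add (fps_sub (fps_const 1) (fps_mul fps_z X))
                        (fps_mul (fps_mul fps_z fps_z) X)) n) /\
  [:: I_count 0; I_count 1; I_count 2; I_count 3; I_count 4; I_count 5;
      I_count 6; I_count 7] = [:: 1; 1; 2; 5; 15; 50; 178; 663]%N.
Proof.
split; first by exists X_sol; exact: X_sol_root.
split; first exact: X_eqn_unique.
split; first by move=> X X_root n; rewrite I_gf_ext_gf gf_identity.
by rewrite I_count0 !I_countS; vm_compute.
Qed.
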